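(* Let $n\ge2$ be an integer, $l_k=\pi k/n$, $S_n=\sum_{k=1}^{n-1}\csc l_k$, $c_k=\cos\frac{\pi(2k-1)}{2n}$, $\sigma_k(\phi)=(1-c_k^2\cos^2\phi)^{1/2}$, $V(\phi)=\frac{S_n}{4\cos\phi}+\frac14\sum_{k=1}^n\frac{1}{\sigma_k(\phi)}$ and $W(\phi)=\cos\phi\,V(\phi)=\frac{S_n}{4}+\frac{\cos\phi}{4}\sum_{k=1}^n\frac1{\sigma_k(\phi)}$. Then (i) $W'(\phi)/W(\phi)\le0$ for all $\phi\in[0,\pi/2)$; (ii) if $n\ge10$, then $W(\pi/2)=S_n/4$ and $\left|W'(\phi)/W(\phi)\right|\le\frac45$ for all $\phi\in[\pi/4,\pi/2)$.
   Context: $V$ is the shape potential of the spatial double-polygon problem in Devaney-type coordinates; $W(\pi/2)$ denotes the value of the expression for $W$ at $\phi=\pi/2$. *)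

From Stdlib Require Import Reals.
From Coquelicot Require Import Coquelicot.
Open Scope R_scope.

Fixpoint rsum_up (m : nat) (f : nat -> R) : R :=
  match m with
  | O => 0
  | S m' => rsum_up m' f + f m
  end.
Definition sum1 (m : nat) (f : nat -> R) : R := rsum_up m f.

Definition l_ (n k : nat) : R := PI * INR k / INR n.
Definition S_ (n : nat) : R := sum1 (n - 1) (fun k => / sin (l_ n k)).
Definition c_ (n k : nat) : R := cos (PI * (2 * INR k - 1) / (2 * INR n)).
Definition sigma_ (n k : nat) (phi : R) : R :=
  sqrt (1 - (c_ n k)^2 * (cos phi)^2).
Definition V_ (n : nat) (phi : R) : R :=
  S_ n / (4 * cos phi) + / 4 * sum1 n (fun k => / sigma_ n k phi).
(* W(phi) = S_n/4 + cos(phi)/4 * sum_k 1/sigma_k(phi)  (= cos phi * V phi for cos phi <> 0) *)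
Definition W_ (n : nat) (phi : R) : R :=
  S_ n / 4 + cos phi / 4 * sum1 n (fun k => / sigma_ n k phi).

(* Differentiating term by term, [W' = -(sin phi / 4) * sum_k sigma_k^-3], which is
   nonpositive while [W > 0]; this gives (i).  For (ii), with [x = cos phi <= 1/sqrt 2]:
   - [sigma_k^-3 <= 1 + 4 c_k^2 x^2] and [sum_k c_k^2 = n/2] (a telescoping cosine sum),
     so [sum_k sigma_k^-3 <= n (1 + 2 x^2)];
   - [sigma_k <= 1], so [sum_k sigma_k^-1 >= n];
   - [csc t >= 1/t] applied to the two smallest and the two largest angles, and
     [csc >= 1] elsewhere, give [S_n >= 5n/4] once [n >= 10];
   - [sin phi (1 + 2 x^2) <= 1 + 4x/5], a one-variable polynomial inequality.
   Hence [-W'/W <= sin phi * n (1 + 2 x^2) / (5n/4 + n x) <= 4/5]. *)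
From Stdlib Require Import Reals Lra Lia.
From Coquelicot Require Import Coquelicot.
Open Scope R_scope.

Lemma rsum_up_ext m f g :
  (forall k, (1 <= k <= m)%nat -> f k = g k) -> rsum_up m f = rsum_up m g.
Proof.
  induction m as [|m IH]; intros H; simpl; [reflexivity|].
  rewrite IH, H; [reflexivity | lia | intros; apply H; lia].
Qed.

Lemma rsum_up_le m f g :
  (forall k, (1 <= k <= m)%nat -> f k <= g k) -> rsum_up m f <= rsum_up m g.
Proof.
  induction m as [|m IH]; intros H; simpl; [lra|].
  apply Rplus_le_compat; [apply IH; intros; apply H | apply H]; lia.
Qed.

Lemma rsum_up_scal m a f : rsum_up m (fun k => a * f k) = a * rsum_up m f.
Proof. induction m as [|m IH]; simpl; [|rewrite IH]; ring. Qed.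

Lemma rsum_up_plus m f g :
  rsum_up m (fun k => f k + g k) = rsum_up m f + rsum_up m g.
Proof. induction m as [|m IH]; simpl; [|rewrite IH]; ring. Qed.

Lemma rsum_up_const m a : rsum_up m (fun _ => a) = INR m * a.
Proof. induction m as [|m IH]; simpl rsum_up; [simpl | rewrite IH, S_INR]; ring. Qed.

Lemma rsum_up_shift m f : rsum_up (S m) f = f 1%nat + rsum_up m (fun k => f (S k)).
Proof. induction m as [|m IH]; [simpl | cbn [rsum_up] in *; rewrite IH]; ring. Qed.

Lemma rsum_up_ge_const m a f :
  (forall k, (1 <= k <= m)%nat -> a <= f k) -> INR m * a <= rsum_up m f.
Proof. intros H; rewrite <- rsum_up_const; apply rsum_up_le, H. Qed.

Lemma rsum_up_pos m f :
  (1 <= m)%nat -> (forall k, (1 <= k <= m)%nat -> 0 < f k) -> 0 < rsum_up m f.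
Proof.
  destruct m as [|m]; [lia|]; intros _ H; simpl.
  assert (0 <= rsum_up m f).
  { rewrite <- (Rmult_0_r (INR m)); apply rsum_up_ge_const.
    intros; left; apply H; lia. }
  assert (0 < f (S m)) by (apply H; lia).
  lra.
Qed.

Lemma is_derive_rsum_up m (F : nat -> R -> R) (F' : nat -> R) x :
  (forall k, (1 <= k <= m)%nat -> is_derive (F k) x (F' k)) ->
  is_derive (fun y => rsum_up m (fun k => F k y)) x (rsum_up m F').
Proof.
  induction m as [|m IH]; intros H; simpl.
  - apply (is_derive_const 0).
  - apply (is_derive_plus (fun y => rsum_up m (fun k => F k y)) (F (S m)));
      [apply IH; intros; apply H | apply H]; lia.
Qed.

Lemma sin_PI_mul_pos a : 0 < a < 1 -> 0 < sin (PI * a).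
Proof. intros. pose proof PI_RGT_0. apply sin_gt_0; nra. Qed.

Lemma sin_l_pos n k : (1 <= k < n)%nat -> 0 < sin (l_ n k).
Proof.
  intros Hk.
  assert (1 <= INR k) by (apply (le_INR 1); lia).
  assert (INR k < INR n) by (apply lt_INR; lia).
  unfold l_; replace (PI * INR k / INR n) with (PI * (INR k / INR n)) by (unfold Rdiv; ring).
  apply sin_PI_mul_pos; split; [apply Rdiv_lt_0_compat | rewrite <- Rdiv_lt_1]; lra.
Qed.

Lemma cos_sq_le_1 x : 0 <= cos x ^ 2 <= 1.
Proof. pose proof (COS_bound x); split; nra. Qed.

Section Sigma.

Variables (n k : nat).
Hypothesis Hk : (1 <= k <= n)%nat.

Lemma c_sq_lt_1 : c_ n k ^ 2 < 1.
Proof.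
  assert (1 <= INR k) by (apply (le_INR 1); lia).
  assert (INR k <= INR n) by (apply le_INR; lia).
  set (a := (2 * INR k - 1) / (2 * INR n)).
  assert (0 < a < 1) by (unfold a; split; [apply Rdiv_lt_0_compat | rewrite <- Rdiv_lt_1]; lra).
  unfold c_; replace (PI * (2 * INR k - 1) / (2 * INR n)) with (PI * a)
    by (unfold a, Rdiv; ring).
  pose proof (sin_PI_mul_pos a ltac:(assumption)).
  pose proof (sin2_cos2 (PI * a)); unfold Rsqr in *; nra.
Qed.

Lemma sigma_sq_pos phi : 0 < 1 - c_ n k ^ 2 * cos phi ^ 2.
Proof. pose proof c_sq_lt_1; pose proof (cos_sq_le_1 phi); nra. Qed.

Lemma sigma_pos phi : 0 < sigma_ n k phi.
Proof. apply sqrt_lt_R0, sigma_sq_pos. Qed.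

Lemma sigma_sq phi : sigma_ n k phi * sigma_ n k phi = 1 - c_ n k ^ 2 * cos phi ^ 2.
Proof. apply sqrt_sqrt; left; apply sigma_sq_pos. Qed.

Lemma inv_sigma_ge_1 phi : 1 <= / sigma_ n k phi.
Proof.
  pose proof (sigma_pos phi); pose proof (sigma_sq phi).
  assert (0 <= c_ n k ^ 2 * cos phi ^ 2) by (apply Rmult_le_pos; apply pow2_ge_0).
  rewrite <- Rinv_1; apply Rinv_le_contravar; nra.
Qed.

End Sigma.

Lemma sin_mul_sum_cos_odd a m :
  2 * sin a * rsum_up m (fun k => cos ((2 * INR k - 1) * a)) = sin (2 * INR m * a).
Proof.
  induction m as [|m IH].
  - simpl; replace (2 * 0 * a) with 0 by ring; rewrite sin_0; ring.
  - cbn [rsum_up]; rewrite Rmult_plus_distr_l, IH, S_INR.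
    set (x := (2 * INR m + 1) * a).
    replace (2 * INR m * a) with (x - a) by (unfold x; ring).
    replace (2 * (INR m + 1) * a) with (x + a) by (unfold x; ring).
    replace ((2 * (INR m + 1) - 1) * a) with x by (unfold x; ring).
    rewrite sin_plus, sin_minus; ring.
Qed.

Lemma sum_c_sq n : (2 <= n)%nat -> rsum_up n (fun k => c_ n k ^ 2) = INR n / 2.
Proof.
  intros Hn.
  assert (Hn0 : 2 <= INR n) by (apply (le_INR 2); lia).
  set (a := PI / INR n).
  assert (Hcos : rsum_up n (fun k => cos ((2 * INR k - 1) * a)) = 0).
  { assert (0 < sin a).
    { unfold a; replace (PI / INR n) with (PI * (1 / INR n)) by (field; lra).
      apply sin_PI_mul_pos; split; [apply Rdiv_lt_0_compat | rewrite <- Rdiv_lt_1]; lra. }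
    pose proof (sin_mul_sum_cos_odd a n) as Htel.
    replace (2 * INR n * a) with (2 * PI) in Htel by (unfold a; field; lra).
    rewrite sin_2PI in Htel.
    apply (Rmult_eq_reg_l (2 * sin a)); lra. }
  transitivity (rsum_up n (fun k => / 2 + / 2 * cos ((2 * INR k - 1) * a))).
  - apply rsum_up_ext; intros k _; unfold c_.
    replace ((2 * INR k - 1) * a) with (2 * (PI * (2 * INR k - 1) / (2 * INR n)))
      by (unfold a; field; lra).
    rewrite cos_2a_cos; field.
  - rewrite rsum_up_plus, rsum_up_const, rsum_up_scal, Hcos; field.
Qed.

Lemma is_derive_cos_div_sigma c p :
  c ^ 2 < 1 ->
  is_derive (fun p => cos p * / sqrt (1 - c ^ 2 * cos p ^ 2)) p
    (- sin p * / sqrt (1 - c ^ 2 * cos p ^ 2) ^ 3).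
Proof.
  intros Hc.
  assert (Hu : 0 < 1 - c ^ 2 * cos p ^ 2) by (pose proof (cos_sq_le_1 p); nra).
  pose proof (sqrt_lt_R0 _ Hu).
  pose proof (sqrt_sqrt _ (Rlt_le _ _ Hu)) as Hsq.
  auto_derive;
    replace (1 + - (c * (c * 1) * (cos p * (cos p * 1)))) with (1 - c ^ 2 * cos p ^ 2) by ring.
  - repeat split; [lra | apply Rgt_not_eq; lra].
  - set (r := sqrt (1 - c ^ 2 * cos p ^ 2)) in *.
    transitivity (- sin p / r ^ 3 * (r * r + c ^ 2 * cos p ^ 2)); [field; lra|].
    rewrite Hsq; field; lra.
Qed.

Lemma W_alt n phi :
  W_ n phi = S_ n / 4 + / 4 * rsum_up n (fun k => cos phi * / sigma_ n k phi).
Proof. unfold W_, sum1; rewrite rsum_up_scal; field. Qed.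

Lemma is_derive_W n phi :
  is_derive (W_ n) phi (- (sin phi / 4) * rsum_up n (fun k => / sigma_ n k phi ^ 3)).
Proof.
  apply is_derive_ext with
    (fun p => S_ n / 4 + / 4 * rsum_up n (fun k => cos p * / sigma_ n k p)).
  { intros; symmetry; apply W_alt. }
  replace (- (sin phi / 4) * rsum_up n (fun k => / sigma_ n k phi ^ 3))
    with (0 + / 4 * rsum_up n (fun k => - sin phi * / sigma_ n k phi ^ 3))
    by (rewrite rsum_up_scal; field).
  apply (is_derive_plus (fun _ => S_ n / 4)); [apply (is_derive_const (S_ n / 4))|].
  apply (is_derive_scal (fun p => rsum_up n (fun k => cos p * / sigma_ n k p))).
  apply (is_derive_rsum_up n (fun k p => cos p * / sigma_ n k p)).
  intros k Hk; apply is_derive_cos_div_sigma, c_sq_lt_1, Hk.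
Qed.

Lemma inv_sin_l_ge_1 n k : (1 <= k < n)%nat -> 1 <= / sin (l_ n k).
Proof.
  intros Hk; pose proof (sin_l_pos n k Hk); pose proof (SIN_bound (l_ n k)).
  rewrite <- Rinv_1; apply Rinv_le_contravar; lra.
Qed.

Lemma inv_sin_l_ge_inv_l n k : (1 <= k < n)%nat -> / l_ n k <= / sin (l_ n k).
Proof.
  intros Hk; pose proof (sin_l_pos n k Hk).
  assert (0 < l_ n k).
  { pose proof PI_RGT_0.
    assert (1 <= INR k) by (apply (le_INR 1); lia).
    assert (0 < INR n) by (apply lt_0_INR; lia).
    unfold l_; apply Rdiv_lt_0_compat; nra. }
  apply Rinv_le_contravar; [|left; apply sin_lt_x]; assumption.
Qed.

Lemma sin_l_sym n k : (k <= n)%nat -> (0 < n)%nat -> sin (l_ n (n - k)) = sin (l_ n k).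
Proof.
  intros Hk Hn; assert (0 < INR n) by (apply lt_0_INR; lia).
  unfold l_; rewrite minus_INR by lia.
  replace (PI * (INR n - INR k) / INR n) with (PI - PI * INR k / INR n) by (field; lra).
  apply sin_PI_x.
Qed.

Lemma S_pos n : (2 <= n)%nat -> 0 < S_ n.
Proof.
  intros; apply rsum_up_pos; [lia|].
  intros k Hk; pose proof (inv_sin_l_ge_1 n k ltac:(lia)); lra.
Qed.

Lemma S_ge n : (10 <= n)%nat -> 5 * INR n / 4 <= S_ n.
Proof.
  intros Hn.
  assert (Hn0 : 10 <= INR n) by (pose proof (le_INR 10 n ltac:(lia)) as H; simpl in H; lra).
  pose proof PI_4; pose proof PI_RGT_0.
  set (f := fun k => / sin (l_ n k)).
  assert (Hsplit : S_ n = f 1%nat + f 2%nat + rsum_up (n - 5) (fun k => f (S (S k)))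
                         + f (n - 2)%nat + f (n - 1)%nat).
  { unfold S_, sum1; fold f.
    replace (n - 1)%nat with (S (S (S (S (n - 5))))) by lia.
    rewrite rsum_up_shift, rsum_up_shift.
    replace (n - 2)%nat with (S (S (S (n - 5)))) by lia.
    cbn [rsum_up]; ring. }
  assert (Hsym : forall k, (k <= n)%nat -> f (n - k)%nat = f k)
    by (intros; unfold f; rewrite sin_l_sym by lia; reflexivity).
  rewrite Hsym, Hsym in Hsplit by lia.
  assert (Hmid : INR (n - 5) * 1 <= rsum_up (n - 5) (fun k => f (S (S k)))).
  { apply rsum_up_ge_const; intros; apply inv_sin_l_ge_1; lia. }
  rewrite minus_INR in Hmid by lia; simpl INR in Hmid.
  assert (G1 : INR n / 4 <= f 1%nat).
  { eapply Rle_trans; [|apply inv_sin_l_ge_inv_l; lia].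
    unfold l_; simpl INR; rewrite Rinv_div; unfold Rdiv.
    apply Rmult_le_compat_l; [lra | apply Rinv_le_contravar; lra]. }
  assert (G2 : INR n / 8 <= f 2%nat).
  { eapply Rle_trans; [|apply inv_sin_l_ge_inv_l; lia].
    unfold l_; simpl INR; rewrite Rinv_div; unfold Rdiv.
    apply Rmult_le_compat_l; [lra | apply Rinv_le_contravar; lra]. }
  lra.
Qed.

Lemma one_le_cube_bound_poly v : 0 <= v <= 1 / 2 -> 1 <= (1 + 4 * v) ^ 2 * (1 - v) ^ 3.
Proof.
  intros Hv.
  assert (0 <= v * (5 - 4 * v) <= 3 / 2) by nra.
  assert (0 <= 5 * (1 - v) - (v * (5 - 4 * v)) ^ 2) by nra.
  replace ((1 + 4 * v) ^ 2 * (1 - v) ^ 3)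
    with (1 + v * (5 * (1 - v) - (v * (5 - 4 * v)) ^ 2)) by ring.
  nra.
Qed.

Lemma inv_pow3_le s v :
  0 < s -> s * s = 1 - v -> 0 <= v <= 1 / 2 -> / s ^ 3 <= 1 + 4 * v.
Proof.
  intros Hs Hsq Hv.
  pose proof (one_le_cube_bound_poly v Hv) as Hpoly.
  assert (Hs3 : 0 < s ^ 3) by (apply pow_lt; lra).
  assert (Hy : 1 <= (1 + 4 * v) * s ^ 3).
  { replace ((1 + 4 * v) ^ 2 * (1 - v) ^ 3) with (((1 + 4 * v) * s ^ 3) ^ 2) in Hpoly
      by (rewrite <- Hsq; ring).
    assert (0 < (1 + 4 * v) * s ^ 3) by (apply Rmult_lt_0_compat; lra).
    nra. }
  replace (1 + 4 * v) with (/ s ^ 3 * ((1 + 4 * v) * s ^ 3)) by (field; lra).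
  rewrite <- (Rmult_1_r (/ s ^ 3)) at 1.
  apply Rmult_le_compat_l; [left; apply Rinv_0_lt_compat|]; lra.
Qed.

(* Squaring reduces this to [x (8/5 - 59/25 x + 4 x^5) >= 0]; the quintic factor is
   positive on [0, 1/sqrt 2] (split at [x = 3/5]). *)
Lemma sin_mul_one_add_two_cos_sq_le x s :
  0 < x -> x ^ 2 <= 1 / 2 -> 0 < s -> s ^ 2 + x ^ 2 = 1 ->
  s * (1 + 2 * x ^ 2) <= 1 + 4 / 5 * x.
Proof.
  intros Hx Hx2 Hs Hsx.
  assert (Hx1 : x <= 7072 / 10000) by nra.
  assert (Hq : 0 <= 8 / 5 - 59 / 25 * x + 4 * x ^ 5).
  { destruct (Rle_lt_dec x (6 / 10)).
    - assert (0 <= x ^ 5) by (apply pow_le; lra). nra.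
    - assert ((6 / 10) ^ 5 <= x ^ 5) by (apply pow_incr; lra). nra. }
  assert ((s * (1 + 2 * x ^ 2)) ^ 2 <= (1 + 4 / 5 * x) ^ 2).
  { replace ((s * (1 + 2 * x ^ 2)) ^ 2) with ((1 - x ^ 2) * (1 + 2 * x ^ 2) ^ 2)
      by (replace (1 - x ^ 2) with (s ^ 2) by lra; ring).
    replace ((1 + 4 / 5 * x) ^ 2)
      with ((1 - x ^ 2) * (1 + 2 * x ^ 2) ^ 2 + x * (8 / 5 - 59 / 25 * x + 4 * x ^ 5))
      by field.
    assert (0 <= x * (8 / 5 - 59 / 25 * x + 4 * x ^ 5)) by (apply Rmult_le_pos; lra).
    lra. }
  nra.
Qed.

Lemma cos_sq_le_half phi : PI / 4 <= phi <= PI / 2 -> cos phi ^ 2 <= 1 / 2.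
Proof.
  intros Hphi; pose proof PI_RGT_0.
  assert (cos (2 * phi) <= 0) by (apply cos_le_0; lra).
  rewrite cos_2a_cos in *; nra.
Qed.

Section W_bounds.

Variables (n : nat) (phi : R).
Hypothesis Hn : (2 <= n)%nat.

Let A := rsum_up n (fun k => / sigma_ n k phi ^ 3).
Let B := rsum_up n (fun k => / sigma_ n k phi).

Lemma Derive_W : Derive (W_ n) phi = - (sin phi / 4) * A.
Proof. apply is_derive_unique, is_derive_W. Qed.

Lemma W_eq : W_ n phi = (S_ n + cos phi * B) / 4.
Proof. unfold W_, sum1, B; field. Qed.

Lemma A_pos : 0 < A.
Proof.
  apply rsum_up_pos; [lia|].
  intros k Hk; apply Rinv_0_lt_compat, pow_lt, sigma_pos, Hk.
Qed.

Lemma B_ge : INR n <= B.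
Proof.
  rewrite <- (Rmult_1_r (INR n)); apply rsum_up_ge_const.
  intros k Hk; apply inv_sigma_ge_1, Hk.
Qed.

Lemma A_le : cos phi ^ 2 <= 1 / 2 -> A <= INR n * (1 + 2 * cos phi ^ 2).
Proof.
  intros Hx2.
  apply Rle_trans with (rsum_up n (fun k => 1 + 4 * cos phi ^ 2 * c_ n k ^ 2)).
  - apply rsum_up_le; intros k Hk.
    replace (4 * cos phi ^ 2 * c_ n k ^ 2) with (4 * (c_ n k ^ 2 * cos phi ^ 2)) by ring.
    apply inv_pow3_le; [apply sigma_pos, Hk | apply sigma_sq, Hk |].
    pose proof (c_sq_lt_1 n k Hk); split; nra.
  - rewrite rsum_up_plus, rsum_up_const, rsum_up_scal, sum_c_sq by lia; lra.
Qed.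

Hypothesis Hphi : 0 <= cos phi.

Lemma W_pos : 0 < W_ n phi.
Proof.
  rewrite W_eq; pose proof (S_pos n Hn); pose proof B_ge.
  assert (0 <= INR n) by apply pos_INR.
  nra.
Qed.

Lemma Derive_W_div_W_nonpos : 0 <= sin phi -> Derive (W_ n) phi / W_ n phi <= 0.
Proof.
  intros Hs; pose proof A_pos; pose proof W_pos.
  rewrite Derive_W; unfold Rdiv.
  apply Rmult_le_0_r; [nra | left; apply Rinv_0_lt_compat; assumption].
Qed.

End W_bounds.

Lemma Rabs_Derive_W_div_W_le n phi :
  (10 <= n)%nat -> PI / 4 <= phi < PI / 2 -> Rabs (Derive (W_ n) phi / W_ n phi) <= 4 / 5.
Proof.
  intros Hn Hphi; pose proof PI_RGT_0.
  assert (Hc : 0 < cos phi) by (apply cos_gt_0; lra).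
  assert (Hs : 0 < sin phi) by (apply sin_gt_0; lra).
  assert (Hx2 := cos_sq_le_half phi ltac:(lra)).
  assert (Hsx : sin phi ^ 2 + cos phi ^ 2 = 1)
    by (rewrite <- (sin2_cos2 phi); unfold Rsqr; ring).
  pose proof (sin_mul_one_add_two_cos_sq_le _ _ Hc Hx2 Hs Hsx).
  pose proof (A_le n phi ltac:(lia) Hx2); pose proof (B_ge n phi).
  pose proof (S_ge n Hn).
  assert (HW := W_pos n phi ltac:(lia) ltac:(lra)).
  rewrite Rabs_left1 by (apply Derive_W_div_W_nonpos; lia || lra).
  apply (Rmult_le_reg_r (W_ n phi) _ _ HW).
  replace (- (Derive (W_ n) phi / W_ n phi) * W_ n phi) with (- Derive (W_ n) phi)
    by (field; lra).
  rewrite Derive_W, W_eq.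
  set (A := rsum_up n (fun k => / sigma_ n k phi ^ 3)) in *.
  set (B := rsum_up n (fun k => / sigma_ n k phi)) in *.
  assert (sin phi * A <= sin phi * (INR n * (1 + 2 * cos phi ^ 2)))
    by (apply Rmult_le_compat_l; lra).
  assert (cos phi * INR n <= cos phi * B) by (apply Rmult_le_compat_l; lra).
  assert (INR n * (sin phi * (1 + 2 * cos phi ^ 2)) <= INR n * (1 + 4 / 5 * cos phi))
    by (apply Rmult_le_compat_l; [apply pos_INR | assumption]).
  lra.
Qed.

Theorem lemma5p4 (n : nat) (hn : (2 <= n)%nat) :
  (forall phi, 0 <= phi < PI / 2 ->
     ex_derive (W_ n) phi /\ Derive (W_ n) phi / W_ n phi <= 0) /\
  ((10 <= n)%nat ->
     W_ n (PI / 2) = S_ n / 4 /\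
     forall phi, PI / 4 <= phi < PI / 2 ->
       ex_derive (W_ n) phi /\ Rabs (Derive (W_ n) phi / W_ n phi) <= 4 / 5).
Proof.
  pose proof PI_RGT_0.
  split.
  - intros phi Hphi; split; [eexists; apply is_derive_W|].
    apply Derive_W_div_W_nonpos; [exact hn | left; apply cos_gt_0 | apply sin_ge_0]; lra.
  - intros H10; split.
    + unfold W_; rewrite cos_PI2; field.
    + intros phi Hphi; split; [eexists; apply is_derive_W|].
      apply Rabs_Derive_W_div_W_le; assumption.
Qed.
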